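(* Let $n>5$ and let $f$ be a permutation of $V(\overline{C_n})$. Suppose there exist a vertex $v$ and two distinct vertices $u,w$, both different from $v$, such that $v$ is adjacent in $\overline{C_n}$ to neither $u$ nor $w$, while $f(v)$ is adjacent in $\overline{C_n}$ to both $f(u)$ and $f(w)$. Then $\delta_f(\overline{C_n})>4$.
   Context: $C_n$ is the cycle on vertices $v_1,\dots,v_n$ (with $v_i$ adjacent to $v_{i+1}$, indices mod $n$), and $\overline{C_n}$ is its complement: two distinct vertices are adjacent in $\overline{C_n}$ iff they are not adjacent in $C_n$. $d(x,y)$ denotes the distance in $\overline{C_n}$. For a permutation $f$ of the vertex set and distinct vertices $x,y$, $\delta_f(x,y)=|d(x,y)-d(f(x),f(y))|$, and $\delta_f(\overline{C_n})=\sum\delta_f(x,y)$ over all unordered pairs $\{x,y\}$ of distinct vertices. *)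

From mathcomp Require Import all_boot all_fingroup.
Set Implicit Arguments. Unset Strict Implicit. Unset Printing Implicit Defensive.

(* Vertices of C_n are 'I_n (v_{i+1} <-> i); cycle edges i ~ i+1 mod n. *)
Definition cyc_adj (n : nat) (x y : 'I_n) : bool :=
  ((x.+1 %% n) == y) || ((y.+1 %% n) == x).

Definition cadj (n : nat) (x y : 'I_n) : bool := (x != y) && ~~ cyc_adj x y.

Fixpoint ball (n : nat) (k : nat) (x : 'I_n) : {set 'I_n} :=
  match k with
  | 0 => [set x]
  | k'.+1 => ball k' x :|: [set y | [exists z in ball k' x, cadj z y]]
  end.

(* Graph distance in the complement of C_n: least k with y in ball k x.
   (If unreachable, returns n; never happens for n > 5 since the graph is connected.) *)
Definition cdist (n : nat) (x y : 'I_n) : nat :=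
  let fix go (k fuel : nat) := match fuel with
    | 0 => k
    | fuel'.+1 => if y \in ball k x then k else go k.+1 fuel' end
  in go 0 n.

Definition delta_pair (n : nat) (f : {perm 'I_n}) (x y : 'I_n) : nat :=
  let a := cdist x y in let b := cdist (f x) (f y) in (a - b) + (b - a).
(* = |a - b| on nat *)

Definition delta (n : nat) (f : {perm 'I_n}) : nat :=
  \sum_(x : 'I_n) \sum_(y : 'I_n | x < y) delta_pair f x y.

(* In the complement of C_n (n > 4) two distinct vertices are at distance 1 or 2
   according as they are non-adjacent or adjacent in C_n, so delta_f counts the
   pairs whose C_n-adjacency is changed by f.  As f maps the n edges of C_n onto
   n pairs, it creates exactly as many edges as it destroys, hence delta_f equals
   the number of ordered pairs that become edges.  Since the C_n-neighbours of v
   are u and w, the two C_n-neighbours of f(v) pull back to two new neighbours of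
   v; and f(u) has a C_n-neighbour other than f(v), which pulls back to a new
   neighbour of u.  These three new edges give delta_f >= 6. *)
From mathcomp Require Import all_boot all_fingroup zify.
Set Implicit Arguments. Unset Strict Implicit. Unset Printing Implicit Defensive.

Section Cycle.
Variable n : nat.
Implicit Types x y z : 'I_n.

Lemma cyc_adjE x y : cyc_adj x y = (y == ordS x) || (y == ord_pred x).
Proof.
rewrite /cyc_adj -[_.+1 %% n]/(val (ordS _)) -[_.+1 %% n]/(val (ordS _)) !val_eqE.
by rewrite -{2}(ord_predK x) (inj_eq (@ordS_inj n)) [_ == y]eq_sym.
Qed.

Lemma eq_ord_pred x y : (y == ord_pred x) = (ordS y == x).
Proof. by rewrite -(inj_eq (@ordS_inj n)) ord_predK. Qed.

Lemma cyc_adj_sym : symmetric (@cyc_adj n).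
Proof. by move=> x y; rewrite /cyc_adj orbC. Qed.

Lemma cadj_sym : symmetric (@cadj n).
Proof. by move=> x y; rewrite /cadj cyc_adj_sym eq_sym. Qed.

Lemma cadjE x y : x != y -> cadj x y = ~~ cyc_adj x y.
Proof. by rewrite /cadj => ->. Qed.

Lemma val_iter_ordS k x : val (iter k (@ordS n) x) = (x + k) %% n.
Proof.
elim: k => [|k IHk] /=; first by rewrite addn0 modn_small.
by rewrite IHk -addn1 modnDml addn1 addnS.
Qed.

Lemma iter_ordS_neq k x : 0 < k < n -> iter k (@ordS n) x != x.
Proof.
move=> k_bounds; rewrite -val_eqE val_iter_ordS /=; have := ltn_ord x.
case: (ltnP (x + k) n) => [small | big] x_lt_n; first by rewrite modn_small; lia.
by rewrite -(subnK big) modnDr modn_small; lia.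
Qed.

Lemma cyc_adj_irr : 1 < n -> irreflexive (@cyc_adj n).
Proof.
move=> n_gt1 x; rewrite cyc_adjE eq_ord_pred eq_sym orbb.
exact/negbTE/(@iter_ordS_neq 1).
Qed.

Lemma ordS_neq_ord_pred x : 2 < n -> ordS x != ord_pred x.
Proof. by move=> n_gt2; rewrite eq_ord_pred; exact: (@iter_ordS_neq 2). Qed.

Lemma cyc_adj_third x a b c :
  cyc_adj x a -> cyc_adj x b -> a != b -> cyc_adj x c -> (c == a) || (c == b).
Proof.
rewrite !cyc_adjE => /orP[]/eqP-> /orP[]/eqP-> //; rewrite ?eqxx // => _.
by rewrite orbC.
Qed.

Lemma cadj_ordS3 x : 4 < n ->
  cadj x (ordS (ordS (ordS x))) && cadj (ordS (ordS (ordS x))) (ordS x).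
Proof.
move=> n_gt4; have S k : 0 < k < 5 -> (iter k (@ordS n) x == x) = false.
  by move=> k_small; apply/negbTE/iter_ordS_neq; lia.
rewrite /cadj !cyc_adjE !eq_ord_pred !(inj_eq (@ordS_inj n)) !(eq_sym x).
by rewrite (S 1) ?(S 2) ?(S 3) ?(S 4).
Qed.

Lemma cadj_common_nbr x y : 4 < n -> cyc_adj x y -> exists z, cadj x z && cadj z y.
Proof.
move=> n_gt4; rewrite cyc_adjE eq_ord_pred => /orP[]/eqP => [->|<-].
  by eexists; apply: cadj_ordS3.
have /andP[yz zSy] := cadj_ordS3 y n_gt4.
by exists (ordS (ordS (ordS y))); rewrite cadj_sym zSy cadj_sym yz.
Qed.

Lemma mem_ball1 x y : (y \in ball 1 x) = (y == x) || cadj x y.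
Proof.
rewrite /= !inE; congr (_ || _); apply/existsP/idP => [[z] | xy].
  by rewrite inE => /andP[/eqP->].
by exists x; rewrite inE eqxx.
Qed.

End Cycle.

Lemma cdistE n (x y : 'I_n) : 4 < n ->
  cdist x y = if x == y then 0 else if cyc_adj x y then 2 else 1.
Proof.
move=> n_gt4; rewrite /cdist; move: n_gt4 x y; case: n => [|[|[|m]]] // n_gt4 x y /=.
rewrite -[x |: _]/(ball 1 x) mem_ball1 in_set1 eq_sym.
case: eqVneq => [// | x_neq_y] /=.
rewrite cadjE //; have [xy|] := boolP (cyc_adj x y); rewrite /= ?ifT //.
have [z /andP[xz zy]] := cadj_common_nbr n_gt4 xy.
rewrite -[x |: _]/(ball 1 x) in_setU in_set; apply/orP; right; apply/existsP.
by exists z; rewrite mem_ball1 xz orbT.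
Qed.

Lemma double_sum_lt_pairs n (r : rel 'I_n) : symmetric r -> irreflexive r ->
  (\sum_(x : 'I_n) \sum_(y : 'I_n | x < y) r x y).*2 = #|[set p | r p.1 p.2]|.
Proof.
move=> r_sym r_irr; rewrite -sum1dep_card [RHS]big_mkcond /=.
rewrite -(pair_bigA _ (fun x y => if r x y then 1 else 0)) /=.
have split_r x y : (if r x y then 1 else 0) =
    (if x < y then r x y : nat else 0) + (if y < x then r y x : nat else 0).
  by case: ltngtP => [||/val_inj->]; rewrite ?r_irr ?addn0 // r_sym.
symmetry; under eq_bigr do under eq_bigr do rewrite split_r.
under eq_bigr do rewrite big_split /=.
rewrite big_split /= [X in _ + X]exchange_big /= addnn.
by congr (_.*2); apply: eq_bigr => x _; rewrite [RHS]big_mkcond.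
Qed.

Lemma card_symdiff (T : finType) (A B : {set T}) : #|A| = #|B| ->
  #|[set x | (x \in A) != (x \in B)]| = (#|B :\: A|).*2.
Proof.
move=> eq_AB.
have -> : [set x | (x \in A) != (x \in B)] = (A :|: B) :\: (A :&: B).
  by apply/setP => x; rewrite !inE; case: (x \in A); case: (x \in B).
rewrite cardsDS; last exact: subset_trans (subsetIl A B) (subsetUl A B).
rewrite cardsD (setIC B A).
have := cardsUI A B; have := subset_leq_card (subsetIl A B); lia.
Qed.

Section Permutation.
Variables (n : nat) (f : {perm 'I_n}).
Implicit Types x y u v w : 'I_n.

Definition new_edges : {set 'I_n * 'I_n} :=
  [set p | cyc_adj (f p.1) (f p.2)] :\: [set p | cyc_adj p.1 p.2].

Lemma delta_pairE x y : 4 < n ->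
  delta_pair f x y = (cyc_adj x y != cyc_adj (f x) (f y)).
Proof.
move=> n_gt4; rewrite /delta_pair !cdistE // (inj_eq (@perm_inj _ f)).
case: eqVneq => [->|_]; first by rewrite !cyc_adj_irr //; lia.
by case: (cyc_adj x y); case: (cyc_adj (f x) (f y)).
Qed.

Lemma delta_new_edges : 4 < n -> delta f = #|new_edges|.
Proof.
move=> n_gt4; apply: double_inj.
pose r x y := cyc_adj x y != cyc_adj (f x) (f y).
have r_sym : symmetric r by move=> x y; rewrite /r cyc_adj_sym [cyc_adj (f x) _]cyc_adj_sym.
have r_irr : irreflexive r by move=> x; rewrite /r !cyc_adj_irr //; lia.
rewrite /delta; under eq_bigr do under eq_bigr do rewrite delta_pairE //.
rewrite (double_sum_lt_pairs r_sym r_irr) /new_edges.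
pose pf p := (f p.1, f p.2).
have pf_inj : injective pf by move=> [x y] [x' y'] [/perm_inj-> /perm_inj->].
have <- : pf @^-1: [set p | cyc_adj p.1 p.2] = [set p | cyc_adj (f p.1) (f p.2)].
  by apply/setP => p; rewrite !inE.
rewrite -card_symdiff ?card_preimset //.
by apply: eq_card => p; rewrite !inE.
Qed.

Lemma new_edges_neq x y : 1 < n -> (x, y) \in new_edges -> x != y.
Proof.
move=> n_gt1; rewrite !inE /= => /andP[_ fxy].
by apply: contraTneq fxy => ->; rewrite cyc_adj_irr.
Qed.

Lemma new_edgesC x y : ((x, y) \in new_edges) = ((y, x) \in new_edges).
Proof. by rewrite !inE /= cyc_adj_sym [cyc_adj (f x) _]cyc_adj_sym. Qed.

Lemma preim_cyc_nbrs x : 2 < n ->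
  exists a b, [/\ a != b, cyc_adj (f x) (f a) & cyc_adj (f x) (f b)].
Proof.
move=> n_gt2; exists (f^-1 (ordS (f x)))%g, (f^-1 (ord_pred (f x)))%g.
by rewrite !permKV !cyc_adjE !eqxx orbT (inj_eq (@perm_inj _ _)) ordS_neq_ord_pred.
Qed.

Lemma two_new_edges v u w : 2 < n -> u != w ->
  cyc_adj v u -> cyc_adj v w -> ~~ cyc_adj (f v) (f u) -> ~~ cyc_adj (f v) (f w) ->
  exists a b, [/\ a != b, (v, a) \in new_edges & (v, b) \in new_edges].
Proof.
move=> n_gt2 uw vu vw fvu fvw.
have new y : cyc_adj (f v) (f y) -> (v, y) \in new_edges.
  move=> fvy; rewrite !inE /= fvy andbT; apply/negP => vy.
  by case/orP: (cyc_adj_third vu vw uw vy) => /eqP yE; [move: fvu | move: fvw];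
    rewrite -yE fvy.
have [a [b [ab fva fvb]]] := preim_cyc_nbrs v n_gt2.
by exists a, b; split; rewrite // new.
Qed.

Lemma exists_new_edge u v : 2 < n -> cyc_adj u v -> ~~ cyc_adj (f u) (f v) ->
  exists2 c, c != v & (u, c) \in new_edges.
Proof.
move=> n_gt2 uv fuv; have [c1 [c2 [c12 fc1 fc2]]] := preim_cyc_nbrs u n_gt2.
have c1v : c1 != v by apply: contraTneq fc1 => ->.
have c2v : c2 != v by apply: contraTneq fc2 => ->.
have [uc1|] := boolP (cyc_adj u c1); last by exists c1; rewrite // !inE /= fc1 andbT.
exists c2; rewrite // !inE /= fc2 andbT; apply/negP => uc2.
have vc1 : v != c1 by rewrite eq_sym.
by case/orP: (cyc_adj_third uv uc1 vc1 uc2); rewrite ?(negbTE c2v) // eq_sym (negbTE c12).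
Qed.

Lemma card_new_edges_gt5 v a b u c : 1 < n -> a != b -> u != v -> c != v ->
  (v, a) \in new_edges -> (v, b) \in new_edges -> (u, c) \in new_edges ->
  5 < #|new_edges|.
Proof.
move=> n_gt1 ab uv cv va vb uc.
have va' := new_edges_neq n_gt1 va; have vb' := new_edges_neq n_gt1 vb.
have uc' := new_edges_neq n_gt1 uc.
set s := [:: (v, a); (a, v); (v, b); (b, v); (u, c); (c, u)].
have s_uniq : uniq s.
  rewrite /= !inE !xpair_eqE eqxx (eq_sym v u) (eq_sym v c).
  by rewrite (negbTE va') (negbTE vb') (negbTE ab) (negbTE uv) (negbTE cv) (negbTE uc') !andbF.
have s_sub : s \subset new_edges.
  by apply/subsetP/allP; rewrite /= (new_edgesC a) (new_edgesC b) (new_edgesC c) va vb uc.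
by apply: leq_trans (subset_leq_card s_sub); rewrite (card_uniqP s_uniq).
Qed.

End Permutation.

Theorem lemma2p4 (n : nat) (f : {perm 'I_n}) (v u w : 'I_n) :
  5 < n ->
  u != w -> u != v -> w != v ->
  ~~ cadj v u -> ~~ cadj v w ->
  cadj (f v) (f u) -> cadj (f v) (f w) ->
  4 < delta f.
Proof.
move=> n_gt5 uw uv wv nvu nvw /andP[_ fvu] /andP[_ fvw].
have n_gt2 : 2 < n by apply: leq_trans n_gt5.
have vu : cyc_adj v u by move: nvu; rewrite cadjE 1?eq_sym // negbK.
have vw : cyc_adj v w by move: nvw; rewrite cadjE 1?eq_sym // negbK.
have [a [b [ab va vb]]] := two_new_edges n_gt2 uw vu vw fvu fvw.
have [c cv uc] : exists2 c, c != v & (u, c) \in new_edges f.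
  by apply: exists_new_edge; rewrite 1?cyc_adj_sym.
rewrite delta_new_edges; last exact: ltnW.
exact/ltnW/(card_new_edges_gt5 (ltnW n_gt2) ab uv cv va vb uc).
Qed.
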